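(* If $n\ge3$, then $$a_{n,i}=p(q+1)a_{n,i-1}-p^2q\,a_{n,i-2}+p^iq(q-1)a_{n-1,i-1},\qquad 3\le i\le n,$$ with $a_{n,1}=pq\sum_{j=1}^{n-1}a_{n-1,j}$ and $a_{n,2}=pa_{n,1}+p^2q(q-1)a_{n-1,1}$ for $n\ge2$, and $a_{1,1}=pq^2$.
   Context: An inversion sequence of length $n$ is a sequence $\rho=\rho_1\cdots\rho_n$ of integers with $1\le \rho_i\le i$ for all $i$; $I_{n,i}$ is the set of those of length $n$ with last letter $i$. Let $\mathrm{area}(\rho)=\rho_1+\cdots+\rho_n$ and $\mathrm{sper}(\rho)=n+\rho_1+\sum_{i=1}^{n-1}\max(\rho_{i+1}-\rho_i,0)$ (area and semi-perimeter of the associated bargraph). Define $a_{n,i}=a_{n,i}(p,q)=\sum_{\rho\in I_{n,i}}p^{\mathrm{area}(\rho)}q^{\mathrm{sper}(\rho)}$. *)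

From mathcomp Require Import all_boot all_order all_algebra.
Set Implicit Arguments. Unset Strict Implicit. Unset Printing Implicit Defensive.
Import GRing.Theory.
Local Open Scope ring_scope.

(* Sequences of positive integers are represented as [seq nat]; the letter
   rho_{k+1} (1-indexed, as in the paper) is [nth 0 s k]. *)

Definition is_invseq (s : seq nat) : bool :=
  all (fun k => (1 <= nth 0 s k <= k.+1)%N) (iota 0 (size s)).

Definition area (s : seq nat) : nat := sumn s.

(* sper(rho) = n + rho_1 + sum_{i=1}^{n-1} max(rho_{i+1} - rho_i, 0);
   note that truncated nat subtraction [m - n] is exactly max(m - n, 0). *)
Definition sper (s : seq nat) : nat :=
  (size s + head 0 s + \sum_(k < (size s).-1) (nth 0 s k.+1 - nth 0 s k))%N.

(* Every inversion sequence of length n has letters in 1..n, hence is the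
   image of some r : 'I_n -> 'I_(n+1); this gives a finite index set. *)
Definition seq_of (n : nat) (r : {ffun 'I_n -> 'I_n.+1}) : seq nat :=
  [seq (r k : nat) | k <- enum 'I_n].

Definition a (R : comNzRingType) (p q : R) (n i : nat) : R :=
  \sum_(r : {ffun 'I_n -> 'I_n.+1} |
          is_invseq (seq_of r) && (last 0%N (seq_of r) == i))
    p ^+ area (seq_of r) * q ^+ sper (seq_of r).

From mathcomp Require Import all_boot all_order all_algebra zify ring.
Import GRing.Theory.
Set Implicit Arguments. Unset Strict Implicit. Unset Printing Implicit Defensive.

(* Removing the last letter i of an inversion sequence of length n+1 leaves an
   inversion sequence t of length n and multiplies the weight by
   p^i q^(1 + max(i - last t, 0)).  Hence a_{n+1,i} = p^i q S_n(i) with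
   S_n(i) = sum_j q^max(i-j,0) a_{n,j}.  The second difference in i of
   q^max(i-j,0) vanishes except at j = i-1, where it equals q - 1; this gives
   S_n(i+2) = (q+1) S_n(i+1) - q S_n(i) + (q-1) a_{n,i+1}, which is the
   recurrence once multiplied by p^(i+2) q. *)

Fixpoint invseqs (n : nat) : seq (seq nat) :=
  if n is m.+1 then [seq rcons t k | t <- invseqs m, k <- iota 1 m.+1]
  else [:: [::]].

Lemma invseqsS n : invseqs n.+1 = [seq rcons t k | t <- invseqs n, k <- iota 1 n.+1].
Proof. by []. Qed.

Lemma is_invseq_rcons (s : seq nat) k :
  is_invseq (rcons s k) = is_invseq s && (1 <= k <= (size s).+1).
Proof.
rewrite /is_invseq size_rcons -[(size s).+1]addn1 iotaD add0n all_cat /= andbT addn1.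
rewrite nth_rcons ltnn eqxx; congr (_ && _).
apply: eq_in_all => j; rewrite mem_iota add0n => /andP[_ hj].
by rewrite nth_rcons hj.
Qed.

Lemma mem_invseqs n s : (s \in invseqs n) = (size s == n) && is_invseq s.
Proof.
elim: n s => [|n IH] s; first by case: s.
rewrite invseqsS; apply/allpairsPdep/idP.
  move=> [t [k [ht hk ->]]]; rewrite IH in ht; case/andP: ht => /eqP hs ht.
  rewrite mem_iota add1n ltnS in hk.
  by rewrite size_rcons hs eqxx is_invseq_rcons ht hs hk.
case/lastP: s => [|t k] //.
rewrite size_rcons is_invseq_rcons eqSS => /andP[/eqP hs /andP[ht hk]].
exists t, k; split => //; first by rewrite IH hs eqxx.
by rewrite mem_iota -hs add1n ltnS.
Qed.

Lemma invseqs_uniq n : uniq (invseqs n).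
Proof.
elim: n => [|n IH] //; rewrite invseqsS.
apply: allpairs_uniq_dep => // [t _|[t1 k1] [t2 k2] _ _ /= /eqP]; first exact: iota_uniq.
by rewrite eqseq_rcons => /andP[/eqP -> /eqP ->].
Qed.

Lemma last_invseqs n t : t \in invseqs n -> last 0 t < n.+1.
Proof.
rewrite mem_invseqs; case/lastP: t => [|t k] //.
by rewrite size_rcons is_invseq_rcons last_rcons => /andP[/eqP <- /and3P[_ _]].
Qed.

Lemma size_seq_of n (r : {ffun 'I_n -> 'I_n.+1}) : size (seq_of r) = n.
Proof. by rewrite size_map size_enum_ord. Qed.

Lemma nth_seq_of n (r : {ffun 'I_n -> 'I_n.+1}) (k : 'I_n) :
  nth 0 (seq_of r) k = r k.
Proof. by rewrite /seq_of (nth_map k) ?size_enum_ord // nth_ord_enum. Qed.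

Lemma seq_of_inj n : injective (@seq_of n).
Proof.
move=> r1 r2 e; apply/ffunP => k; apply: val_inj.
by rewrite /= -!nth_seq_of e.
Qed.

Lemma seq_of_onto n s : size s = n -> is_invseq s ->
  exists r : {ffun 'I_n -> 'I_n.+1}, seq_of r = s.
Proof.
move=> hs /allP hinv; exists [ffun k : 'I_n => inord (nth 0 s k)].
apply: (@eq_from_nth _ 0); rewrite size_seq_of // => k hk.
rewrite (nth_seq_of _ (Ordinal hk)) ffunE inordK //.
have /andP[_ hle] : 1 <= nth 0 s k <= k.+1 by apply: hinv; rewrite mem_iota hs.
by rewrite ltnS (leq_trans hle).
Qed.

Lemma sper_rcons (t : seq nat) i :
  sper (rcons t i) = (sper t + (i - last 0 t)).+1.
Proof.
case: t => [|x t]; first by rewrite /sper /= !big_ord0; lia.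
rewrite /sper size_rcons /= big_ord_recr /= -rcons_cons.
rewrite [nth 0 (rcons t i) _]nth_rcons ltnn eqxx [nth 0 (rcons _ i) _]nth_rcons /= ltnSn.
have -> : last x t = nth 0 (x :: t) (size t) by rewrite -[size t]/((size (x :: t)).-1) nth_last.
rewrite (eq_bigr (fun k : 'I_(size t) => nth 0 t k - nth 0 (x :: t) k)); first by lia.
by move=> k _; rewrite !nth_rcons /= ltn_ord -rcons_cons nth_rcons /= ltnS ltnW.
Qed.

Local Open Scope ring_scope.

Lemma big_invseq_ffun (R : nmodType) n (G : seq nat -> R) :
  \sum_(r : {ffun 'I_n -> 'I_n.+1} | is_invseq (seq_of r)) G (seq_of r)
  = \sum_(s <- invseqs n) G s.
Proof.
rewrite -big_filter -(big_map (@seq_of n) predT G).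
apply/perm_big/uniq_perm.
- by rewrite map_inj_uniq ?filter_uniq ?index_enum_uniq //; apply: seq_of_inj.
- exact: invseqs_uniq.
move=> s; rewrite mem_invseqs; apply/mapP/idP.
  by move=> [r]; rewrite mem_filter => /andP[hr _] ->; rewrite size_seq_of eqxx.
move=> /andP[/eqP hs hinv]; have [r hr] := seq_of_onto hs hinv.
by exists r; rewrite // mem_filter mem_index_enum hr hinv.
Qed.

(* [qconv q (a p q n) n i] is S_n(i); truncated subtraction is the max(_, 0). *)
Definition qconv (R : comNzRingType) (q : R) (c : nat -> R) (m i : nat) : R :=
  \sum_(j < m.+1) q ^+ (i - j) * c j.

Section QConv.

Variables (R : comNzRingType) (q : R) (c : nat -> R) (m : nat).

Lemma qpow_subn_second_difference i j :
  q ^+ (i.+2 - j) - (q + 1) * q ^+ (i.+1 - j) + q * q ^+ (i - j)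
  = if j == i.+1 then q - 1 else 0.
Proof.
case: (ltngtP j i.+1) => [hj|hj|->].
- have [-> ->] : (i.+2 - j = (i - j).+2 /\ i.+1 - j = (i - j).+1)%N by lia.
  rewrite !exprS; ring.
- have [-> [-> ->]] : (i.+2 - j = 0 /\ i.+1 - j = 0 /\ i - j = 0)%N by lia.
  rewrite expr0; ring.
- have [-> [-> ->]] : (i.+2 - i.+1 = 1 /\ i.+1 - i.+1 = 0 /\ i - i.+1 = 0)%N by lia.
  rewrite expr1 expr0; ring.
Qed.

Lemma qconv_rec i : (i < m)%N ->
  qconv q c m i.+2 = (q + 1) * qconv q c m i.+1 - q * qconv q c m i + (q - 1) * c i.+1.
Proof.
move=> lt_im.
suff -> : qconv q c m i.+2 = (q + 1) * qconv q c m i.+1 - q * qconv q c m i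
                             + \sum_(j < m.+1 | j == i.+1 :> nat) (q - 1) * c j.
  by rewrite (big_pred1 (Ordinal (lt_im : i.+1 < m.+1)%N)).
rewrite big_mkcond /qconv !mulr_sumr -sumrB -big_split /=; apply: eq_bigr => j _.
have /(congr1 ( *%R^~ (c j))) := qpow_subn_second_difference i j.
by rewrite (fun_if ( *%R^~ (c j))) mul0r /= => <-; ring.
Qed.

Hypothesis c0 : c 0%N = 0.

Lemma qconv1 : qconv q c m 1%N = \sum_(1 <= j < m.+1) c j.
Proof.
rewrite /qconv big_ord_recl c0 mulr0 add0r big_add1 big_mkord /=.
by apply: eq_bigr => j _; rewrite /bump leq0n add1n subSS sub0n expr0 mul1r.
Qed.

Lemma qconv0 : qconv q c m 0%N = qconv q c m 1%N.
Proof. by rewrite /qconv !big_ord_recl c0 !mulr0 !add0r. Qed.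

End QConv.

Section Weights.

Variables (R : comNzRingType) (p q : R).

Definition weight (s : seq nat) : R := p ^+ area s * q ^+ sper s.

Lemma weight_rcons t i :
  weight (rcons t i) = p ^+ i * q ^+ (i - last 0%N t).+1 * weight t.
Proof. by rewrite /weight /area sumn_rcons sper_rcons !exprS !exprD; ring. Qed.

Lemma a_invseqs n i : a p q n i = \sum_(s <- invseqs n | last 0%N s == i) weight s.
Proof.
rewrite /a big_mkcondr (big_invseq_ffun n (fun s => if last 0%N s == i then weight s else 0)).
by rewrite -big_mkcond.
Qed.

Lemma big_invseqs_last n (f : nat -> R) :
  \sum_(t <- invseqs n) f (last 0%N t) * weight t = \sum_(j < n.+1) f j * a p q n j.
Proof.
rewrite (eq_bigr (fun j : 'I_n.+1 =>
  \sum_(t <- invseqs n) if last 0%N t == j then f j * weight t else 0)); last first.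
  by move=> j _; rewrite a_invseqs mulr_sumr big_mkcond.
rewrite exchange_big /=; apply: eq_big_seq => t ht.
by rewrite -big_mkcond (big_pred1 (Ordinal (last_invseqs ht))) // => j; rewrite eq_sym.
Qed.

Lemma a_succ n i : (1 <= i <= n.+1)%N ->
  a p q n.+1 i = p ^+ i * q * qconv q (a p q n) n i.
Proof.
move=> hi; rewrite a_invseqs invseqsS big_mkcond big_allpairs_dep.
rewrite /qconv -(big_invseqs_last n (fun j => q ^+ (i - j))) mulr_sumr; apply: eq_bigr => t _.
rewrite (bigD1_seq i) ?iota_uniq ?mem_iota ?add1n ?ltnS // last_rcons eqxx.
rewrite big1 => [|k /negPf]; last by rewrite last_rcons eq_sym => ->.
by rewrite /= addr0 weight_rcons exprS; ring.
Qed.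

Lemma a_n0 n : (1 <= n)%N -> a p q n 0 = 0.
Proof.
move=> hn; rewrite a_invseqs big1_seq // => t /andP[/eqP hlast].
rewrite mem_invseqs; case/lastP: t hlast => [_ /andP[/eqP hs]|t k]; first by rewrite -hs in hn.
by rewrite last_rcons is_invseq_rcons => -> /andP[_ /andP[_ /andP[]]].
Qed.

Lemma a00 : a p q 0 0 = 1.
Proof. by rewrite a_invseqs /= big_cons big_nil /= /weight /area /sper /= big_ord0 mulr1 addr0. Qed.

End Weights.

Theorem proposition2p6 (R : comNzRingType) (p q : R) :
  (forall n i : nat, (3 <= n)%N -> (3 <= i <= n)%N ->
     a p q n i = p * (q + 1) * a p q n (i - 1)
                 - p ^+ 2 * q * a p q n (i - 2)
                 + p ^+ i * q * (q - 1) * a p q (n - 1) (i - 1)) /\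
  (forall n : nat, (2 <= n)%N ->
     a p q n 1 = p * q * \sum_(1 <= j < n) a p q (n - 1) j) /\
  (forall n : nat, (2 <= n)%N ->
     a p q n 2 = p * a p q n 1 + p ^+ 2 * q * (q - 1) * a p q (n - 1) 1) /\
  a p q 1 1 = p * q ^+ 2.
Proof.
split; [|split; [|split]].
- move=> [|m] // [|[|[|k]]] // _ /andP[_ hk]; rewrite !subSS !subn0.
  have lt_km : (k.+1 < m)%N := hk.
  have hk2 : (0 < k.+2 <= m.+1)%N := ltnW hk.
  have hk1 : (0 < k.+1 <= m.+1)%N := ltnW (ltnW hk).
  rewrite (@a_succ _ p q m k.+3) // (@a_succ _ p q m k.+2) // (@a_succ _ p q m k.+1) //.
  by rewrite (qconv_rec _ _ lt_km) !exprS; ring.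
- move=> [|m] // hm; rewrite subSS subn0 a_succ // qconv1 ?a_n0 // expr1.
- move=> [|m] // hm; rewrite subSS subn0 !a_succ // qconv_rec // qconv0 ?a_n0 //.
  by rewrite expr1 expr2; ring.
- by rewrite (@a_succ _ p q 0 1) // /qconv big_ord_recl big_ord0 a00 /= addr0 mulr1 expr2 mulrA.
Qed.
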